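(* Let $P$ be a pmf on a finite set $\mathcal{X}$ with $P(x)>0$ for all $x$, and for $(z,Q)\in\mathcal{G}$ let $$c_P(z,Q)=\sum_{x\in\mathcal{X}}g_{z,Q,P}(x)\log_2\frac{\sum_{x'}g_{z,Q,P}(x')}{g_{z,Q,P}(x)}\quad(0\log(a/0)=0).$$ Then on $\mathcal{G}$, $c_P(z,Q)$ is concave in $Q$ for each fixed $z$ and concave in $z$ for each fixed $Q$.
   Context: $g_{z,Q,P}(x)=\big(1-\frac{z^2}{2}\big)P(x)+z\sqrt{Q(x)P(x)}$. $\mathcal{G}=\{(z,Q): z\ge0,\ Q \text{ a pmf on }\mathcal{X},\ g_{z,Q,P}(x)\ge0\ \forall x\in\mathcal{X}\}$ (for fixed $z$, resp. fixed $Q$, the corresponding section of $\mathcal{G}$ is convex). *)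

From Stdlib Require Import Reals Lra.
Open Scope R_scope.

(* The finite alphabet X is {0, ..., n-1}; functions on X are nat -> R,
   only their values on 0..n-1 matter. *)

Fixpoint sumX (n : nat) (f : nat -> R) : R :=
  match n with
  | O => 0
  | S m => sumX m f + f m
  end.

Definition is_pmf (n : nat) (f : nat -> R) : Prop :=
  (forall x, (x < n)%nat -> 0 <= f x) /\ sumX n f = 1.

Definition log2 (x : R) : R := ln x / ln 2.

Definition gfun (z : R) (Q P : nat -> R) (x : nat) : R :=
  (1 - z ^ 2 / 2) * P x + z * sqrt (Q x * P x).

Definition inG (n : nat) (P : nat -> R) (z : R) (Q : nat -> R) : Prop :=
  0 <= z /\ is_pmf n Q /\ (forall x, (x < n)%nat -> 0 <= gfun z Q P x).

Definition xlogterm (a s : R) : R :=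
  if Req_EM_T a 0 then 0 else a * log2 (s / a).

Definition cP (n : nat) (P : nat -> R) (z : R) (Q : nat -> R) : R :=
  let S := sumX n (gfun z Q P) in
  sumX n (fun x => xlogterm (gfun z Q P x) S).

Definition mixfun (t : R) (Q1 Q2 : nat -> R) (x : nat) : R :=
  t * Q1 x + (1 - t) * Q2 x.

(* Write H(f) = sum_x f(x) log2 (S_f / f(x)), S_f = sum_x f, so that c_P(z,Q) = H(g_{z,Q,P}).
   H is concave and nondecreasing in every coordinate on nonnegative vectors: by Gibbs'
   inequality H(a) <= sum_x a(x) log2 (S_u / u(x)) for any u charging the support of a, and
   these cross-entropy weights are nonnegative once a <= u.  Hence t H(a) + (1-t) H(b) <= H(u)
   whenever t a + (1-t) b <= u pointwise.  It remains to note that g_{z,Q,P}(x) is pointwise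
   concave in Q (concavity of sqrt) and in z (a quadratic with leading coefficient -P(x)/2). *)

From Stdlib Require Import Reals Lra Psatz.
Open Scope R_scope.

Lemma sumX_le n (f g : nat -> R) :
  (forall x, (x < n)%nat -> f x <= g x) -> sumX n f <= sumX n g.
Proof.
  induction n as [|m IH]; simpl; intros Hfg; [lra|].
  assert (f m <= g m) by (apply Hfg; auto).
  assert (sumX m f <= sumX m g) by (apply IH; intros; apply Hfg; auto).
  lra.
Qed.

Lemma sumX_linear n (c d : R) (f g : nat -> R) :
  sumX n (fun x => c * f x + d * g x) = c * sumX n f + d * sumX n g.
Proof. induction n as [|m IH]; simpl; [ring | rewrite IH; ring]. Qed.

Lemma sumX_ext n (f g : nat -> R) : (forall x, f x = g x) -> sumX n f = sumX n g.
Proof. intros Hfg; induction n as [|m IH]; simpl; [reflexivity | rewrite IH, Hfg; reflexivity]. Qed.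

Lemma sumX_ge0 n (f : nat -> R) :
  (forall x, (x < n)%nat -> 0 <= f x) -> 0 <= sumX n f.
Proof.
  induction n as [|m IH]; simpl; intros Hf; [lra|].
  assert (0 <= f m) by (apply Hf; auto).
  assert (0 <= sumX m f) by (apply IH; intros; apply Hf; auto).
  lra.
Qed.

Lemma sumX_ge_term n (f : nat -> R) x :
  (forall y, (y < n)%nat -> 0 <= f y) -> (x < n)%nat -> f x <= sumX n f.
Proof.
  induction n as [|m IH]; simpl; intros Hf Hx; [lia|].
  assert (0 <= sumX m f) by (apply sumX_ge0; intros; apply Hf; auto).
  assert (0 <= f m) by (apply Hf; auto).
  destruct (Nat.eq_dec x m) as [->|Hne]; [lra|].
  assert (f x <= sumX m f) by (apply IH; [intros; apply Hf; auto | lia]).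
  lra.
Qed.

Lemma ln_le_sub1 x : 0 < x -> ln x <= x - 1.
Proof. intros Hx. pose proof (exp_ineq1_le (ln x)) as He. rewrite exp_ln in He; lra. Qed.

Lemma ln_ge0 x : 1 <= x -> 0 <= ln x.
Proof.
  intros Hx. destruct (Req_dec x 1) as [->|Hne]; [rewrite ln_1; lra|].
  pose proof (ln_increasing 1 x ltac:(lra) ltac:(lra)) as Hl. rewrite ln_1 in Hl; lra.
Qed.

Lemma ln_div x y : 0 < x -> 0 < y -> ln (x / y) = ln x - ln y.
Proof.
  intros Hx Hy. unfold Rdiv. rewrite ln_mult, ln_Rinv; try lra.
  apply Rinv_0_lt_compat; lra.
Qed.

Lemma ln2_pos : 0 < ln 2.
Proof. pose proof ln_lt_2. lra. Qed.

Lemma mul_ln_ratio_le a b : 0 < a -> 0 < b -> a * ln (b / a) <= b - a.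
Proof.
  intros Ha Hb. pose proof (ln_le_sub1 (b / a) ltac:(apply Rdiv_lt_0_compat; lra)) as Hl.
  replace (b - a) with (a * (b / a - 1)) by (field; lra).
  apply Rmult_le_compat_l; lra.
Qed.

Definition entropy (n : nat) (f : nat -> R) : R :=
  sumX n (fun x => xlogterm (f x) (sumX n f)).

Definition surprisal (u S : R) : R :=
  if Req_EM_T u 0 then 0 else log2 (S / u).

Definition cross_entropy (n : nat) (a u : nat -> R) : R :=
  sumX n (fun x => a x * surprisal (u x) (sumX n u)).

Lemma surprisal_ge0 u S : 0 <= u <= S -> 0 <= surprisal u S.
Proof.
  intros Hu. unfold surprisal, log2. destruct (Req_EM_T u 0); [lra|].
  apply Rmult_le_pos; [|left; apply Rinv_0_lt_compat, ln2_pos].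
  apply ln_ge0. apply Rmult_le_reg_r with u; [lra|].
  unfold Rdiv. rewrite Rmult_assoc, Rinv_l; lra.
Qed.

(* The slack term (Sa / Su) u - a sums to at most 0, which yields Gibbs' inequality. *)
Lemma xlogterm_le_cross a Sa u Su :
  0 <= a <= Sa -> 0 <= u <= Su -> (0 < a -> 0 < u) ->
  xlogterm a Sa <= a * surprisal u Su + (Sa / Su * u - a) / ln 2.
Proof.
  intros Ha Hu Hau. pose proof ln2_pos as Hl2.
  unfold xlogterm, surprisal, log2.
  destruct (Req_EM_T a 0) as [->|Ha0].
  - assert (0 <= Sa / Su * u).
    { destruct (Req_dec Su 0) as [->|]; [unfold Rdiv; rewrite Rinv_0; lra|].
      unfold Rdiv. apply Rmult_le_pos; [apply Rmult_le_pos|]; try lra.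
      apply Rlt_le, Rinv_0_lt_compat; lra. }
    assert (0 <= (Sa / Su * u - 0) / ln 2).
    { unfold Rdiv. apply Rmult_le_pos; [lra | apply Rlt_le, Rinv_0_lt_compat; lra]. }
    destruct (Req_EM_T u 0); lra.
  - pose proof (Hau ltac:(lra)) as Hu0.
    destruct (Req_EM_T u 0) as [|_]; [lra|].
    pose proof (mul_ln_ratio_le a (Sa / Su * u)
                  ltac:(lra) ltac:(apply Rmult_lt_0_compat; [apply Rdiv_lt_0_compat|]; lra))
      as Hg.
    assert (Hsplit : ln ((Sa / Su * u) / a) = ln (Sa / a) - ln (Su / u)).
    { rewrite !ln_div by (try apply Rmult_lt_0_compat; try apply Rdiv_lt_0_compat; lra).
      rewrite ln_mult, ln_div by (try apply Rdiv_lt_0_compat; lra). ring. }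
    rewrite Hsplit in Hg.
    unfold Rdiv at 1 3 5. rewrite <- !Rmult_assoc, <- Rmult_plus_distr_r.
    apply Rmult_le_compat_r; [left; apply Rinv_0_lt_compat; lra|].
    unfold Rdiv in Hg |- *. lra.
Qed.

Lemma entropy_le_cross_entropy n (a u : nat -> R) :
  (forall x, (x < n)%nat -> 0 <= a x) ->
  (forall x, (x < n)%nat -> 0 <= u x) ->
  (forall x, (x < n)%nat -> 0 < a x -> 0 < u x) ->
  entropy n a <= cross_entropy n a u.
Proof.
  intros Ha Hu Hau. unfold entropy, cross_entropy.
  set (Sa := sumX n a). set (Su := sumX n u).
  apply Rle_trans with
    (sumX n (fun x => 1 * (a x * surprisal (u x) Su)
                      + / ln 2 * (Sa / Su * u x + (-1) * a x))).
  - apply sumX_le. intros x Hx.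
    pose proof (xlogterm_le_cross (a x) Sa (u x) Su
      (conj (Ha x Hx) (sumX_ge_term n a x Ha Hx))
      (conj (Hu x Hx) (sumX_ge_term n u x Hu Hx)) (Hau x Hx)).
    unfold Rdiv in *. lra.
  - rewrite sumX_linear.
    assert (Hslack : sumX n (fun x => Sa / Su * u x + (-1) * a x) <= 0).
    { rewrite sumX_linear. fold Su Sa.
      assert (0 <= Sa) by (apply sumX_ge0; auto).
      destruct (Req_dec Su 0) as [->|]; [unfold Rdiv; rewrite Rinv_0; lra|].
      field_simplify; lra. }
    assert (0 < / ln 2) by (apply Rinv_0_lt_compat, ln2_pos).
    nra.
Qed.

Lemma cross_entropy_le_entropy n (a u : nat -> R) :
  (forall x, (x < n)%nat -> 0 <= u x) ->
  (forall x, (x < n)%nat -> a x <= u x) ->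
  cross_entropy n a u <= entropy n u.
Proof.
  intros Hu Hau. unfold cross_entropy, entropy. apply sumX_le. intros x Hx.
  pose proof (surprisal_ge0 (u x) (sumX n u) (conj (Hu x Hx) (sumX_ge_term n u x Hu Hx))).
  pose proof (Hau x Hx).
  unfold xlogterm, surprisal in *. destruct (Req_EM_T (u x) 0); nra.
Qed.

Lemma entropy_concave_le n (a b u : nat -> R) (t : R) :
  0 <= t <= 1 ->
  (forall x, (x < n)%nat -> 0 <= a x) ->
  (forall x, (x < n)%nat -> 0 <= b x) ->
  (forall x, (x < n)%nat -> t * a x + (1 - t) * b x <= u x) ->
  t * entropy n a + (1 - t) * entropy n b <= entropy n u.
Proof.
  intros Ht Ha Hb Hu.
  assert (Hu0 : forall x, (x < n)%nat -> 0 <= u x).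
  { intros x Hx. specialize (Ha x Hx); specialize (Hb x Hx); specialize (Hu x Hx). nra. }
  assert (Hscaled : forall s (c d : nat -> R), 0 <= s <= 1 ->
            (forall x, (x < n)%nat -> 0 <= c x) -> (forall x, (x < n)%nat -> 0 <= d x) ->
            (forall x, (x < n)%nat -> s * c x + (1 - s) * d x <= u x) ->
            s * entropy n c <= s * cross_entropy n c u).
  { intros s c d Hs Hc Hd Hcd. destruct (Req_dec s 0) as [->|Hs0]; [lra|].
    apply Rmult_le_compat_l; [lra|]. apply entropy_le_cross_entropy; auto.
    intros x Hx Hcx. specialize (Hd x Hx). specialize (Hcd x Hx). nra. }
  pose proof (Hscaled t a b Ht Ha Hb Hu) as Hta.
  pose proof (Hscaled (1 - t) b a ltac:(lra) Hb Ha
                ltac:(intros x Hx; specialize (Hu x Hx); lra)) as Htb.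
  pose proof (cross_entropy_le_entropy n (fun x => t * a x + (1 - t) * b x) u Hu0 Hu) as Hmix.
  unfold cross_entropy in Hta, Htb, Hmix.
  replace (sumX n (fun x => (t * a x + (1 - t) * b x) * surprisal (u x) (sumX n u)))
    with (t * sumX n (fun x => a x * surprisal (u x) (sumX n u))
          + (1 - t) * sumX n (fun x => b x * surprisal (u x) (sumX n u))) in Hmix
    by (rewrite <- sumX_linear; apply sumX_ext; intros; ring).
  lra.
Qed.

Lemma sqrt_concave t p q : 0 <= t <= 1 -> 0 <= p -> 0 <= q ->
  t * sqrt p + (1 - t) * sqrt q <= sqrt (t * p + (1 - t) * q).
Proof.
  intros Ht Hp Hq.
  pose proof (sqrt_pos p). pose proof (sqrt_pos q).
  pose proof (sqrt_sqrt p Hp). pose proof (sqrt_sqrt q Hq).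
  rewrite <- (sqrt_pow2 (t * sqrt p + (1 - t) * sqrt q)) by nra.
  apply sqrt_le_1_alt. simpl.
  assert (0 <= t * (1 - t) * (sqrt p - sqrt q) ^ 2)
    by (apply Rmult_le_pos; [nra | apply pow2_ge_0]).
  nra.
Qed.

Lemma gfun_concave_Q z (Q1 Q2 P : nat -> R) t x :
  0 <= z -> 0 <= t <= 1 -> 0 <= Q1 x -> 0 <= Q2 x -> 0 <= P x ->
  t * gfun z Q1 P x + (1 - t) * gfun z Q2 P x <= gfun z (mixfun t Q1 Q2) P x.
Proof.
  intros Hz Ht HQ1 HQ2 HP. unfold gfun, mixfun.
  pose proof (sqrt_concave t (Q1 x * P x) (Q2 x * P x) Ht ltac:(nra) ltac:(nra)).
  replace ((t * Q1 x + (1 - t) * Q2 x) * P x)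
    with (t * (Q1 x * P x) + (1 - t) * (Q2 x * P x)) by ring.
  nra.
Qed.

Lemma gfun_concave_z z1 z2 (Q P : nat -> R) t x :
  0 <= t <= 1 -> 0 <= P x ->
  t * gfun z1 Q P x + (1 - t) * gfun z2 Q P x <= gfun (t * z1 + (1 - t) * z2) Q P x.
Proof.
  intros Ht HP. unfold gfun.
  assert (0 <= t * (1 - t) * (z1 - z2) ^ 2 * P x)
    by (apply Rmult_le_pos; [apply Rmult_le_pos; [nra | apply pow2_ge_0] | lra]).
  nra.
Qed.

Theorem mainTheorem11 (n : nat) (P : nat -> R) :
  is_pmf n P ->
  (forall x, (x < n)%nat -> 0 < P x) ->
  (* concave in Q for each fixed z, on the section of G *)
  (forall (z : R) (Q1 Q2 : nat -> R) (t : R),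
     inG n P z Q1 -> inG n P z Q2 -> 0 <= t <= 1 ->
     t * cP n P z Q1 + (1 - t) * cP n P z Q2
       <= cP n P z (mixfun t Q1 Q2)) /\
  (* concave in z for each fixed Q, on the section of G *)
  (forall (Q : nat -> R) (z1 z2 t : R),
     inG n P z1 Q -> inG n P z2 Q -> 0 <= t <= 1 ->
     t * cP n P z1 Q + (1 - t) * cP n P z2 Q
       <= cP n P (t * z1 + (1 - t) * z2) Q).
Proof.
  intros _ HP. split.
  - intros z Q1 Q2 t [Hz [[HQ1 _] Hg1]] [_ [[HQ2 _] Hg2]] Ht.
    apply (entropy_concave_le n _ _ _ t Ht Hg1 Hg2).
    intros x Hx. apply gfun_concave_Q; auto. now apply Rlt_le, HP.
  - intros Q z1 z2 t [_ [_ Hg1]] [_ [_ Hg2]] Ht.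
    apply (entropy_concave_le n _ _ _ t Ht Hg1 Hg2).
    intros x Hx. apply gfun_concave_z; auto. now apply Rlt_le, HP.
Qed.
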